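(* Let $u\in[0,1]$, $s\geq 1$, and for $x\in(0,1)$ define $$f_{u,s}(x)=\frac{s}{2}\log(1-ux^2)-\log\left(\frac{\pi}{2\mathcal{K}(x)}\right).$$ Then $f_{u,s}(x)>0$ for all $x\in(0,1)$ if and only if $2su\leq 1$.
   Context: $\mathcal{K}(r)$ denotes the complete elliptic integral of the first kind: for $0<r<1$, $\mathcal{K}(r)=\int_0^{\pi/2}(1-r^2\sin^2\theta)^{-1/2}\,d\theta=\frac{\pi}{2}\,{}_2F_1(1/2,1/2;1;r^2)$. *)

From Stdlib Require Import Reals.
From Coquelicot Require Import Coquelicot.
Open Scope R_scope.

Definition ellipticK (r : R) : R :=
  RInt (fun t => / sqrt (1 - r ^ 2 * (sin t) ^ 2)) 0 (PI / 2).

Definition f_us (u s x : R) : R :=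
  s / 2 * ln (1 - u * x ^ 2) - ln (PI / (2 * ellipticK x)).

From Stdlib Require Import Reals Lra Psatz.
From Coquelicot Require Import Coquelicot.
Open Scope R_scope.

(* Both directions rest on two-sided estimates of K near 0.  Writing
   p(t) = sqrt(1 - x^2 sin^2 t) and q = sqrt(1 - x^2/2), the mean of p^2 over
   [0, pi/2] is q^2, so a second-order lower bound for 1/p around q, whose
   linear term integrates to zero, gives K(x) > pi / (2 q).  Hence
   log(pi / (2K)) < log(1 - x^2/2) / 2 <= (s/2) log(1 - x^2/(2s)), the last
   step being Bernoulli's inequality, and this is at most (s/2) log(1 - u x^2)
   when 2su <= 1.  Conversely K(x) <= (pi/2)(1 + x^2/4 + O(x^4)) and
   log y <= y - 1 give f_{u,s}(x) <= x^2 (1/4 - su/2 + O(x^2)), which is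
   negative for small x when 2su > 1. *)

Lemma ln_le_sub1 (y : R) : 0 < y -> ln y <= y - 1.
Proof.
  intros hy. pose proof (exp_ineq1_le (ln y)) as h.
  rewrite exp_ln in h by exact hy. lra.
Qed.

(* Bernoulli's inequality (1 - w) <= (1 - w/s)^s, in logarithmic form. *)
Lemma ln_1_sub_le_scaled (w s : R) : 0 < w < 1 -> 1 <= s ->
  ln (1 - w) <= s * ln (1 - w / s).
Proof.
  intros hw hs.
  set (p := 1 - w / s).
  assert (hws : 0 < w / s <= w).
  { split; [apply Rdiv_lt_0_compat; lra|].
    apply Rmult_le_reg_r with s; [lra|]. unfold Rdiv.
    rewrite Rmult_assoc, Rinv_l by lra. nra. }
  assert (hp : 0 < p) by (unfold p; lra).
  assert (A : ln ((1 - w) / p) <= (1 - w) / p - 1)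
    by (apply ln_le_sub1, Rdiv_lt_0_compat; lra).
  assert (B : ln (/ p) <= / p - 1) by (apply ln_le_sub1, Rinv_0_lt_compat; lra).
  unfold Rdiv in A. rewrite ln_mult, ln_Rinv in A by (try apply Rinv_0_lt_compat; lra).
  rewrite ln_Rinv in B by lra.
  assert (C : (s - 1) * - ln p <= (s - 1) * (/ p - 1)) by (apply Rmult_le_compat_l; lra).
  assert (D : (1 - w) * / p - 1 + (s - 1) * (/ p - 1) = 0).
  { unfold p. field. lra. }
  nra.
Qed.

Lemma sqr_in_01 (x : R) : 0 < x < 1 -> 0 < x ^ 2 < 1.
Proof. intros hx. split; nra. Qed.

Lemma sin_sqr_bound (t : R) : 0 <= sin t ^ 2 <= 1.
Proof. pose proof (SIN_bound t). split; nra. Qed.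

Lemma ellipticK_radicand_pos (r t : R) : r ^ 2 < 1 -> 0 < 1 - r ^ 2 * sin t ^ 2.
Proof.
  intros hr. pose proof (sin_sqr_bound t).
  assert (0 <= r ^ 2) by apply pow2_ge_0. nra.
Qed.

Lemma ex_RInt_ellipticK (r : R) : r ^ 2 < 1 ->
  ex_RInt (fun t => / sqrt (1 - r ^ 2 * sin t ^ 2)) 0 (PI / 2).
Proof.
  intros hr. apply (@ex_RInt_continuous R_CompleteNormedModule). intros t _.
  apply (@ex_derive_continuous R_AbsRing R_NormedModule).
  pose proof (ellipticK_radicand_pos r t hr).
  auto_derive. repeat split; [lra|]. apply Rgt_not_eq, sqrt_lt_R0. lra.
Qed.

(* The difference is (q - p)^2 ((2q + p) / (2 p q^3) - (p + q)^2 / 8). *)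
Lemma inv_ge_second_order (p q : R) : 0 < p <= 1 -> 0 < q <= 1 ->
  / q - (p ^ 2 - q ^ 2) / (2 * q ^ 3) + (p ^ 2 - q ^ 2) ^ 2 / 8 <= / p.
Proof.
  intros hp hq.
  assert (E : / p - (/ q - (p ^ 2 - q ^ 2) / (2 * q ^ 3) + (p ^ 2 - q ^ 2) ^ 2 / 8)
     = (q - p) ^ 2 * ((2 * q + p) / (2 * p * q ^ 3) - (p + q) ^ 2 / 8)).
  { field. lra. }
  assert (hfac : 1 <= (2 * q + p) / (2 * p * q ^ 3)).
  { assert (0 < p * q ^ 3) by (apply Rmult_lt_0_compat; [lra|apply pow_lt; lra]).
    apply Rmult_le_reg_r with (2 * p * q ^ 3); [lra|].
    replace ((2 * q + p) / (2 * p * q ^ 3) * (2 * p * q ^ 3)) with (2 * q + p)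
      by (field; lra).
    assert (q ^ 3 <= q) by (simpl; nra). nra. }
  assert (0 <= (q - p) ^ 2) by apply pow2_ge_0.
  assert ((p + q) ^ 2 <= 4) by nra.
  nra.
Qed.

(* The difference is (1 - p)^2 (2 (1 + p)^2 - (2 + p) / (2 p)). *)
Lemma inv_le_second_order (p : R) : 1 / 2 <= p <= 1 ->
  / p <= 1 + (1 - p ^ 2) / 2 + 2 * (1 - p ^ 2) ^ 2.
Proof.
  intros hp.
  assert (E : 1 + (1 - p ^ 2) / 2 + 2 * (1 - p ^ 2) ^ 2 - / p
     = (1 - p) ^ 2 * (2 * (1 + p) ^ 2 - (2 + p) / (2 * p))).
  { field. lra. }
  assert (hfac : (2 + p) / (2 * p) <= 5 / 2).
  { apply Rmult_le_reg_r with (2 * p); [lra|].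
    replace ((2 + p) / (2 * p) * (2 * p)) with (2 + p) by (field; lra). lra. }
  assert (0 <= (1 - p) ^ 2) by apply pow2_ge_0.
  nra.
Qed.

Lemma is_RInt_ellipticK_minorant (q z : R) : q <> 0 ->
  is_RInt (fun t => / q - z * cos (2 * t) / 2 / (2 * q ^ 3)
                        + (z * cos (2 * t) / 2) ^ 2 / 8)
    0 (PI / 2) (PI / (2 * q) + z ^ 2 * PI / 128).
Proof.
  intros hq.
  set (F := fun t => t / q - z * sin (2 * t) / (8 * q ^ 3)
                     + z ^ 2 / 32 * (t / 2 + sin (4 * t) / 8)).
  replace (PI / (2 * q) + z ^ 2 * PI / 128) with (minus (F (PI / 2)) (F 0)).
  - apply (@is_RInt_derive R_CompleteNormedModule).
    + intros t _. unfold F. auto_derive; auto.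
      replace (4 * t) with (2 * (2 * t)) by ring. rewrite (cos_2a_cos (2 * t)).
      field. auto.
    + intros t _. apply (@ex_derive_continuous R_AbsRing R_NormedModule).
      auto_derive; auto.
  - unfold F, minus, plus, opp; simpl.
    replace (2 * (PI / 2)) with PI by field. replace (4 * (PI / 2)) with (2 * PI) by field.
    rewrite sin_PI, sin_2PI, !Rmult_0_r, sin_0. field. auto.
Qed.

Lemma is_RInt_ellipticK_majorant (z : R) :
  is_RInt (fun t => 1 + z * sin t ^ 2 / 2 + 2 * z ^ 2)
    0 (PI / 2) (PI / 2 * (1 + z / 4 + 2 * z ^ 2)).
Proof.
  set (F := fun t => t * (1 + 2 * z ^ 2) + z / 2 * (t / 2 - sin (2 * t) / 4)).
  replace (PI / 2 * (1 + z / 4 + 2 * z ^ 2)) with (minus (F (PI / 2)) (F 0)).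
  - apply (@is_RInt_derive R_CompleteNormedModule).
    + intros t _. unfold F. auto_derive; auto. rewrite cos_2a_sin. field.
    + intros t _. apply (@ex_derive_continuous R_AbsRing R_NormedModule).
      auto_derive; auto.
  - unfold F, minus, plus, opp; simpl.
    replace (2 * (PI / 2)) with PI by field.
    rewrite sin_PI, !Rmult_0_r, sin_0. field.
Qed.

Lemma ellipticK_gt (r : R) : 0 < r ^ 2 < 1 ->
  PI / (2 * sqrt (1 - r ^ 2 / 2)) < ellipticK r.
Proof.
  intros hr.
  set (q := sqrt (1 - r ^ 2 / 2)).
  assert (hq2 : q ^ 2 = 1 - r ^ 2 / 2) by (apply pow2_sqrt; lra).
  assert (hq0 : 0 < q) by (apply sqrt_lt_R0; lra).
  assert (hq1 : q <= 1) by nra.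
  pose proof (is_RInt_ellipticK_minorant q (r ^ 2) (Rgt_not_eq _ _ hq0)) as HL.
  assert (Hle : PI / (2 * q) + (r ^ 2) ^ 2 * PI / 128 <= ellipticK r).
  { rewrite <- (is_RInt_unique _ _ _ _ HL). unfold ellipticK.
    apply RInt_le; [pose proof PI_RGT_0; lra | eexists; exact HL
                   | apply ex_RInt_ellipticK; lra |].
    intros t _.
    pose proof (ellipticK_radicand_pos r t (proj2 hr)).
    pose proof (sin_sqr_bound t).
    set (p := sqrt (1 - r ^ 2 * sin t ^ 2)).
    assert (hp2 : p ^ 2 = 1 - r ^ 2 * sin t ^ 2) by (apply pow2_sqrt; lra).
    assert (hp0 : 0 < p) by (apply sqrt_lt_R0; lra).
    assert (hp1 : p <= 1) by nra.
    assert (hd : p ^ 2 - q ^ 2 = r ^ 2 * cos (2 * t) / 2)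
      by (rewrite hp2, hq2, cos_2a_sin; field).
    pose proof (inv_ge_second_order p q (conj hp0 hp1) (conj hq0 hq1)) as A.
    rewrite hd in A. exact A. }
  assert (0 < (r ^ 2) ^ 2 * PI / 128)
    by (pose proof PI_RGT_0; assert (0 < (r ^ 2) ^ 2) by (apply pow_lt; lra); nra).
  lra.
Qed.

Lemma ellipticK_pos (r : R) : 0 < r ^ 2 < 1 -> 0 < ellipticK r.
Proof.
  intros hr. eapply Rlt_trans; [|exact (ellipticK_gt r hr)].
  pose proof PI_RGT_0. apply Rdiv_lt_0_compat; [lra|].
  apply Rmult_lt_0_compat; [lra|]. apply sqrt_lt_R0. lra.
Qed.

Lemma ellipticK_le (r : R) : r ^ 2 <= 3 / 4 ->
  ellipticK r <= PI / 2 * (1 + r ^ 2 / 4 + 2 * (r ^ 2) ^ 2).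
Proof.
  intros hr.
  pose proof (is_RInt_ellipticK_majorant (r ^ 2)) as HU.
  rewrite <- (is_RInt_unique _ _ _ _ HU). unfold ellipticK.
  apply RInt_le; [pose proof PI_RGT_0; lra | apply ex_RInt_ellipticK; lra
                 | eexists; exact HU |].
  intros t _.
  pose proof (sin_sqr_bound t).
  assert (0 <= r ^ 2) by apply pow2_ge_0.
  set (p := sqrt (1 - r ^ 2 * sin t ^ 2)).
  assert (hp2 : p ^ 2 = 1 - r ^ 2 * sin t ^ 2) by (apply pow2_sqrt; nra).
  assert (hp0 : 0 <= p) by apply sqrt_pos.
  assert (hp : 1 / 2 <= p <= 1) by nra.
  pose proof (inv_le_second_order p hp) as A.
  replace (1 - p ^ 2) with (r ^ 2 * sin t ^ 2) in A by lra.
  assert ((r ^ 2 * sin t ^ 2) ^ 2 <= (r ^ 2) ^ 2) by (apply pow_incr; split; nra).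
  lra.
Qed.

Lemma f_us_pos (u s x : R) : 1 <= s -> 2 * s * u <= 1 -> 0 < x < 1 ->
  0 < f_us u s x.
Proof.
  intros hs hsu hx. unfold f_us.
  pose proof (sqr_in_01 x hx) as hz.
  set (z := x ^ 2) in *.
  pose proof (ellipticK_gt x hz) as KL. pose proof (ellipticK_pos x hz).
  set (q := sqrt (1 - z / 2)) in KL.
  assert (hq2 : q ^ 2 = 1 - z / 2) by (apply pow2_sqrt; lra).
  assert (hq0 : 0 < q) by (apply sqrt_lt_R0; lra).
  pose proof PI_RGT_0.
  assert (hratio : PI / (2 * ellipticK x) < q).
  { apply Rmult_lt_reg_r with (2 * ellipticK x); [lra|].
    apply Rmult_lt_reg_r with (/ (2 * q)); [apply Rinv_0_lt_compat; lra|].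
    replace (PI / (2 * ellipticK x) * (2 * ellipticK x) * / (2 * q))
      with (PI / (2 * q)) by (field; lra).
    replace (q * (2 * ellipticK x) * / (2 * q)) with (ellipticK x) by (field; lra).
    exact KL. }
  assert (L1 : ln (PI / (2 * ellipticK x)) < ln (1 - z / 2) / 2).
  { replace (ln (1 - z / 2) / 2) with (ln q)
      by (rewrite <- hq2; simpl; rewrite Rmult_1_r, ln_mult by lra; field).
    apply ln_increasing; [apply Rdiv_lt_0_compat|]; lra. }
  assert (L2 : ln (1 - z / 2) <= s * ln (1 - z / 2 / s))
    by (apply ln_1_sub_le_scaled; lra).
  assert (huz : u * z <= z / 2 / s).
  { apply Rmult_le_reg_r with (2 * s); [lra|].
    replace (z / 2 / s * (2 * s)) with z by (field; lra). nra. }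
  assert (z / 2 / s <= z / 2).
  { apply Rmult_le_reg_r with s; [lra|].
    replace (z / 2 / s * s) with (z / 2) by (field; lra). nra. }
  assert (L3 : s * ln (1 - z / 2 / s) <= s * ln (1 - u * z))
    by (apply Rmult_le_compat_l; [lra|apply ln_le; lra]).
  lra.
Qed.

Lemma f_us_le (u s x : R) : 0 <= s -> 0 < x -> x ^ 2 <= 3 / 4 -> u * x ^ 2 < 1 ->
  f_us u s x <= x ^ 2 * (1 / 4 - s * u / 2 + 2 * x ^ 2).
Proof.
  intros hs hx hx2 hux. unfold f_us.
  pose proof (ellipticK_le x hx2) as KU.
  assert (hz : 0 < x ^ 2 < 1) by (split; [apply pow_lt|]; lra).
  pose proof (ellipticK_pos x hz).
  set (z := x ^ 2) in *.
  pose proof PI_RGT_0.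
  assert (L1 : s / 2 * ln (1 - u * z) <= s / 2 * - (u * z))
    by (apply Rmult_le_compat_l; [|pose proof (ln_le_sub1 (1 - u * z))]; lra).
  assert (L2 : - ln (PI / (2 * ellipticK x)) <= z / 4 + 2 * z ^ 2).
  { rewrite <- ln_Rinv by (apply Rdiv_lt_0_compat; lra).
    replace (/ (PI / (2 * ellipticK x))) with (2 * ellipticK x / PI) by (field; lra).
    assert (2 * ellipticK x / PI <= 1 + z / 4 + 2 * z ^ 2).
    { apply Rmult_le_reg_r with PI; [lra|].
      replace (2 * ellipticK x / PI * PI) with (2 * ellipticK x) by (field; lra).
      lra. }
    pose proof (ln_le_sub1 (2 * ellipticK x / PI) ltac:(apply Rdiv_lt_0_compat; lra)).
    lra. }
  lra.
Qed.

Lemma f_us_neg_near_0 (u s : R) : 0 <= u <= 1 -> 1 <= s -> 1 < 2 * s * u ->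
  exists x, 0 < x < 1 /\ f_us u s x < 0.
Proof.
  intros hu hs hsu.
  set (e := (2 * s * u - 1) / 4).
  set (x := Rmin (e / 4) (1 / 2)).
  assert (hx0 : 0 < x) by (apply Rmin_glb_lt; unfold e; lra).
  assert (hx1 : x <= 1 / 2) by apply Rmin_r.
  assert (hxe : x <= e / 4) by apply Rmin_l.
  assert (hz : 0 < x ^ 2 <= x / 2) by (split; [apply pow_lt|simpl]; nra).
  exists x. split; [lra|].
  eapply Rle_lt_trans; [apply f_us_le; nra|].
  replace (1 / 4 - s * u / 2 + 2 * x ^ 2) with (2 * x ^ 2 - e) by (unfold e; field).
  assert (2 * x ^ 2 - e < 0) by (unfold e in *; lra).
  nra.
Qed.

Theorem lemma2p1 (u s : R) (hu : 0 <= u <= 1) (hs : 1 <= s) :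
  (forall x : R, 0 < x < 1 -> 0 < f_us u s x) <-> 2 * s * u <= 1.
Proof.
  split.
  - intros hpos. apply Rnot_lt_le. intros hsu.
    destruct (f_us_neg_near_0 u s hu hs hsu) as [x [hx hneg]].
    pose proof (hpos x hx). lra.
  - intros hsu x hx. exact (f_us_pos u s x hs hsu hx).
Qed.
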